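(* Let $\Psi=\langle\Pi,f\rangle$ be an identified decomposable minimization or maximization problem with decomposition function $\lambda$, let $\alpha\ge1$, suppose $\Pi$ admits a feasibility scheme with proof size $p$, and suppose $\Psi$ admits an $\alpha$-ADPLS (for every $k\in\mathbb Z$) with proof size $r$. Then there exists an $\alpha$-APLS for $\Psi$ with proof size $O(p+r+\log n+H)$, where $H$ is the maximum number of bits needed to represent $\lambda(\mathsf I(v),\mathsf O(v))$ over $v\in V$.
   Context: All graphs are finite, connected and undirected, $G=(V,E)$, $n=|V|$, $N(v)$ is the set of neighbors of $v$; each node distinguishes its incident edges by port numbers. An input assignment $\mathsf{I}:V\to\{0,1\}^*$ and an output assignment $\mathsf{O}:V\to\{0,1\}^*$ give each node a local input and a local output. A configuration graph is a pair $\langle G,S\rangle$ with $S:V\to\{0,1\}^*$; an input graph $\langle G,\mathsf I\rangle$ and an IO graph $\langle G,\mathsf I,\mathsf O\rangle$ (with $S(v)=\mathsf I(v)\cdot\mathsf O(v)$) are configuration graphs. Given a universe $\mathcal U$ of configuration graphs and disjoint families $\mathcal F_Y,\mathcal F_N\subseteq\mathcal U$, a gap proof labeling scheme (GPLS) consists of a prover which, given a configuration graph in $\mathcal F_Y$, assigns a label $L(v)\in\{0,1\}^*$ to every node, and a verifier which at each node $v$ receives only $\langle S(v),L(v),L^N(v)\rangle$, where $L^N(v)$ is the vector of labels of $v$'s neighbors (indexed by port), and outputs True or False; the verifier accepts if all nodes output True and rejects otherwise. The GPLS is correct if (i) for every configuration graph in $\mathcal F_Y$ the verifier accepts under the prover's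 labels, and (ii) for every configuration graph in $\mathcal F_N$ the verifier rejects under every label assignment. Its proof size is the maximum label length assigned by the prover over $\mathcal F_Y$. A distributed graph optimization problem $\Psi=\langle\Pi,f\rangle$ consists of a set $\Pi$ of IO graphs and an integer-valued objective $f$ on $\Pi$; $\langle G,\mathsf I\rangle$ is legal if some $\mathsf O$ has $\langle G,\mathsf I,\mathsf O\rangle\in\Pi$ (a feasible solution); $OPT_\Psi(G,\mathsf I)$ is the infimum (minimization) or supremum (maximization) of $f$ over feasible solutions. A feasibility scheme for $\Pi$ is a GPLS over $\{\langle G,\mathsf I,\mathsf O\rangle:\langle G,\mathsf I\rangle\text{ legal}\}$ with $\mathcal F_Y=\Pi$ and $\mathcal F_N$ its complement in that universe. An $\alpha$-APLS for $\Psi$ ($\alpha\ge1$) is a GPLS over $\mathcal U=\{\langle G,\mathsf I,\mathsf O\rangle:\langle G,\mathsf I\rangle\text{ legal}\}$ with $\mathcal F_Y$ the IO graphs in $\Pi$ with $f=OPT_\Psi(G,\mathsf I)$, and $\mathcal F_N$ equal to $\mathcal U$ minus the IO graphs in $\Pi$ with $f\le\alpha\cdot OPT_\Psi(G,\mathsf I)$ (minimization) resp. $f\ge OPT_\Psi(G,\mathsf I)/\alpha$ (maximization). For $k\in\mathbb Z$, an $\alpha$-ADPLS for $\Psi$ and $k$ is a GPLS over the legal input graphs with $\mathcal F_Y=\{OPT_\Psi\ge k\}$, $\mathcal F_N=\{OPT_\Psi<k/\alpha\}$ (minimization), resp. $\mathcal F_Y=\{OPT_\Psi\le k\}$, $\mathcal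 F_N=\{OPT_\Psi>\alpha k\}$ (maximization); ''$\Psi$ admits an $\alpha$-ADPLS with proof size $r$'' means for every $k$ there is one with proof size at most $r$. $\Psi$ is identified if in every IO graph the input assignment encodes at each node a unique identifier of $O(\log n)$ bits. $\Psi$ is decomposable with decomposition function $\lambda:\{0,1\}^*\times\{0,1\}^*\to\mathbb R$ if $f(\langle G,\mathsf I,\mathsf O\rangle)=\sum_{v\in V}\lambda(\mathsf I(v),\mathsf O(v))$ for every IO graph in $\Pi$. *)

From HB Require Import structures.
From mathcomp Require Import all_boot all_order all_algebra.
From mathcomp Require Import all_classical reals ereal.
Set Implicit Arguments. Unset Strict Implicit. Unset Printing Implicit Defensive.
Import Order.TTheory GRing.Theory Num.Theory.
Local Open Scope ring_scope.

Notation bits := (seq bool).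

(* A finite, connected, simple, undirected, nonempty graph with port
   numbering: node v lists its neighbours in the order of its ports
   (port i of v leads to the i-th element of padj v). *)
Record pgraph := PGraph {
  gn : nat;
  padj : 'I_gn -> seq 'I_gn;
  padj_uniq : forall v, uniq (padj v);
  padj_irrefl : forall v, v \notin padj v;
  padj_sym : forall u v, (u \in padj v) = (v \in padj u);
  padj_conn : forall u v, connect (fun x y => y \in padj x) u v;
  gn_pos : (0 < gn)%N }.

Record cgraph (St : Type) := CGraph { cg : pgraph; cstate : 'I_(gn (cg)) -> St }.
Arguments CGraph {St}.
Arguments cstate {St} c _.

(* Input graphs: states are inputs; IO graphs: states are (input, output)
   pairs (the concatenation I(v).O(v), kept as a pair). *)
Definition igraph := cgraph bits.
Definition iograph := cgraph (bits * bits).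

Definition mkIO (Gi : igraph) (O : 'I_(gn (cg Gi)) -> bits) : iograph :=
  CGraph (cg Gi) (fun v => (cstate Gi v, O v)).
Definition inp (C : iograph) : igraph := CGraph (cg C) (fun v => (cstate C v).1).
Definition outp (C : iograph) (v : 'I_(gn (cg C))) : bits := (cstate C v).2.
Arguments mkIO : clear implicits.
Arguments outp : clear implicits.

Definition labeling St (C : cgraph St) := 'I_(gn (cg C)) -> bits.
Definition verifier St := St -> bits -> seq bits -> bool.
Definition prover St := forall C : cgraph St, labeling C.

Definition accepts St (ver : verifier St) (C : cgraph St) (L : labeling C) :=
  forall v, ver (cstate C v) (L v) [seq L u | u <- padj v].
Arguments accepts {St} ver C L.

Definition is_gpls St (U FY FN : cgraph St -> Prop)
    (pr : prover St) (ver : verifier St) : Prop :=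
  (forall C, U C -> FY C -> accepts ver C (pr C)) /\
  (forall C, U C -> FN C -> forall L : labeling C, ~ accepts ver C L).

Definition proof_size_le St (U FY : cgraph St -> Prop) (pr : prover St)
    (bnd : cgraph St -> nat) : Prop :=
  forall C, U C -> FY C -> forall v, (size (pr C v) <= bnd C)%N.

Definition nodes St (C : cgraph St) : nat := gn (cg C).

Section Problems.
Variable R : realType.
Variables (Pi : iograph -> Prop) (f : iograph -> int).

Definition legal (Gi : igraph) : Prop := exists O, Pi (mkIO Gi O).

Definition fvals (Gi : igraph) : set (\bar R) :=
  [set ((f (mkIO Gi O))%:~R)%:E | O in [set O | Pi (mkIO Gi O)]].

Definition OPT (ismin : bool) (Gi : igraph) : \bar R :=
  if ismin then ereal_inf (fvals Gi) else ereal_sup (fvals Gi).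

Definition fE (C : iograph) : \bar R := ((f C)%:~R)%:E.

Definition U_io (C : iograph) : Prop := legal (inp C).

Definition feasibility_scheme (pr : prover (bits * bits))
    (ver : verifier (bits * bits)) (p : nat -> nat) : Prop :=
  is_gpls U_io Pi (fun C => ~ Pi C) pr ver /\
  proof_size_le U_io Pi pr (fun C => p (nodes C)).

Definition APLS_Y ismin (C : iograph) : Prop :=
  Pi C /\ fE C = OPT ismin (inp C).
Definition APLS_N ismin (alpha : R) (C : iograph) : Prop :=
  ~ (Pi C /\ (if ismin then (fE C <= alpha%:E * OPT ismin (inp C))%E
                        else (fE C >= OPT ismin (inp C) / alpha%:E)%E)).
Definition is_APLS ismin alpha pr ver : Prop :=
  is_gpls U_io (APLS_Y ismin) (APLS_N ismin alpha) pr ver.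

Definition ADPLS_Y ismin (k : int) (Gi : igraph) : Prop :=
  if ismin then (OPT ismin Gi >= (k%:~R)%:E)%E
  else (OPT ismin Gi <= (k%:~R)%:E)%E.
Definition ADPLS_N ismin (alpha : R) (k : int) (Gi : igraph) : Prop :=
  if ismin then (OPT ismin Gi < (k%:~R / alpha)%:E)%E
  else (OPT ismin Gi > (alpha * k%:~R)%:E)%E.
Definition ADPLS ismin alpha k (pr : prover bits) (ver : verifier bits)
    (r : nat -> nat) : Prop :=
  is_gpls legal (ADPLS_Y ismin k) (ADPLS_N ismin alpha k) pr ver /\
  proof_size_le legal (ADPLS_Y ismin k) pr (fun Gi => r (nodes Gi)).

(* Identified: the input of each node encodes (via some fixed decoding
   function idf) an identifier of O(log n) bits, unique in the graph. *)
Definition identified : Prop :=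
  exists (idf : bits -> bits) (c : nat), forall C, Pi C ->
    injective (fun v : 'I_(nodes C) => idf (cstate C v).1) /\
    forall v : 'I_(nodes C),
      (size (idf (cstate C v).1) <= c * trunc_log 2 (nodes C) + c)%N.

Definition decomposable (lambda : bits -> bits -> R) : Prop :=
  forall C, Pi C ->
    (f C)%:~R = \sum_(v < nodes C) lambda (cstate C v).1 (cstate C v).2.

End Problems.

(* x is representable with (at most) b bits: a fixed-point binary number
   with a b-bit magnitude m and e <= b fractional bits (plus a sign). *)
Definition repr_bits (R : realType) (x : R) (b : nat) : Prop :=
  exists (m : int) (e : nat),
    (e <= b)%N /\ (`|m| < 2 ^ b)%N /\ x = m%:~R / 2%:R ^+ e.

From HB Require Import structures.
From mathcomp Require Import all_boot all_order all_algebra.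
From mathcomp Require Import all_classical reals ereal.
From mathcomp Require Import zify.
Import Order.TTheory GRing.Theory Num.Theory.
Local Open Scope ring_scope.
Set Implicit Arguments. Unset Strict Implicit. Unset Printing Implicit Defensive.

(* The label of a node v concatenates: the feasibility label, the label of the
   ADPLS for the threshold k = f(C), the value k itself, and a certificate that
   the sum of lambda(I(u), O(u)) over all nodes u equals k.  That certificate is
   a BFS spanning tree: every node stores its identifier, its parent's
   identifier, its depth, the root identifier and the sum of lambda over its
   subtree.  Locally a node checks that k and the root agree with its
   neighbours, that it has a neighbour one level up naming its parent (unless
   it is a root, whose subtree sum must be k), and that its subtree sum is its
   own value plus the sums of the neighbours naming it as parent.  Unique
   identifiers force a unique root and, by telescoping, the root holds the
   global sum; hence k = f(C), the ADPLS for f(C) accepts, and the gap property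
   of that ADPLS yields the approximation ratio. *)

(* Self-delimiting code of a bit string: each bit b becomes 1b, then 0 ends. *)
Fixpoint enc1 (s : bits) : bits :=
  if s is b :: s' then true :: b :: enc1 s' else [:: false].

Definition enc (l : seq bits) : bits := flatten (map enc1 l).

Fixpoint dec (l : bits) : seq bits :=
  match l with
  | false :: l' => [::] :: dec l'
  | true :: b :: l' =>
      if dec l' is s :: ss then (b :: s) :: ss else [:: [:: b]]
  | _ => [::]
  end.

Lemma dec_enc1 s rest : dec (enc1 s ++ rest) = s :: dec rest.
Proof. by elim: s => [|b s IH] //=; rewrite IH. Qed.

Lemma dec_enc l : dec (enc l) = l.
Proof. by elim: l => [|s l IH] //=; rewrite dec_enc1 IH. Qed.

Lemma size_enc l : size (enc l) = (\sum_(s <- l) (2 * size s).+1)%N.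
Proof.
have size_enc1 s : size (enc1 s) = (2 * size s).+1.
  by elim: s => [|b s IH] //=; rewrite IH mulnS.
elim: l => [|s l IH]; first by rewrite big_nil.
by rewrite /enc /= size_cat IH big_cons size_enc1.
Qed.

(* The i-th component of an encoded label ([::] when absent). *)
Definition field (i : nat) (l : bits) : bits := nth [::] (dec l) i.

Lemma field_enc i l : field i (enc l) = nth [::] l i.
Proof. by rewrite /field dec_enc. Qed.

(* Little-endian binary code of a natural number (n is enough fuel). *)
Fixpoint encN_fuel (fuel n : nat) : bits :=
  if fuel is fuel'.+1 then
    (if n is 0 then [::] else odd n :: encN_fuel fuel' n./2)
  else [::].

Definition encN (n : nat) : bits := encN_fuel n n.

Definition decN (s : bits) : nat := foldr (fun (b : bool) m => b + m.*2)%N 0%N s.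

Lemma decN_encN n : decN (encN n) = n.
Proof.
suff dec_fuel fuel m : (m <= fuel)%N -> decN (encN_fuel fuel m) = m by exact: dec_fuel.
elim: fuel m => [|fuel IH] [|m] //= le_m.
rewrite IH; first exact: odd_double_half m.+1.
have := uphalfK m; rewrite -addnn; case: (odd m) => /=; lia.
Qed.

Lemma size_encN n k : (n < 2 ^ k)%N -> (size (encN n) <= k)%N.
Proof.
suff size_fuel fuel m : (m < 2 ^ k)%N -> (size (encN_fuel fuel m) <= k)%N by exact: size_fuel.
elim: fuel m k => [|fuel IH] [|m] [|k] //= lt_m.
rewrite ltnS IH //; rewrite expnS in lt_m; lia.
Qed.

Definition encI (z : int) : bits := (z < 0) :: encN `|z|%N.

Definition decI (s : bits) : int :=
  if s is b :: s' then (if b then - (decN s')%:Z else (decN s')%:Z) else 0.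

Lemma decI_encI z : decI (encI z) = z.
Proof.
rewrite /= decN_encN abszE; case: ltrP => [z_lt0|z_ge0].
  by rewrite ltr0_norm ?opprK.
by rewrite ger0_norm.
Qed.

(* From here on the decoders are used only through their specifications. *)
Arguments decN : simpl never.
Arguments decI : simpl never.

Lemma size_encI z k : (`|z| < 2 ^ k)%N -> (size (encI z) <= k.+1)%N.
Proof. by move=> lt_z; rewrite /= ltnS size_encN. Qed.

Section SpanningTree.
Variable G : pgraph.
Local Notation T := 'I_(gn G).
Local Notation adj := (fun x y : T => y \in padj x).

Lemma const_on_graph (X : Type) (g : T -> X) :
  (forall u v, v \in padj u -> g v = g u) -> forall u v, g u = g v.
Proof.
move=> g_adj u v; have /connectP [q q_path ->] := padj_conn u v.
elim: q u q_path => [|x q IH] u //= /andP [x_adj q_path].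
by rewrite -(IH x q_path) (g_adj u x).
Qed.

Definition groot : T := Ordinal (gn_pos G).

Definition reachable_in (v : T) (k : nat) : bool :=
  `[< exists q : seq T, [/\ path adj groot q, last groot q = v & size q = k] >].

Lemma reachable_in_some v : exists k, reachable_in v k.
Proof.
have /connectP [q q_path q_last] := padj_conn groot v.
by exists (size q); apply/asboolP; exists q.
Qed.

Definition dist (v : T) : nat := ex_minn (reachable_in_some v).

Lemma reachable_dist v : reachable_in v (dist v).
Proof. by rewrite /dist; case: ex_minnP. Qed.

Lemma dist_min v k : reachable_in v k -> (dist v <= k)%N.
Proof. by rewrite /dist; case: ex_minnP => m _ m_min /m_min. Qed.

Lemma dist_root : dist groot = 0%N.
Proof. by apply/eqP; rewrite -leqn0 dist_min //; apply/asboolP; exists [::]. Qed.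

Lemma dist_eq0 v : dist v = 0%N -> v = groot.
Proof.
move=> dv0; have /asboolP [q [_ q_last]] := reachable_dist v.
by rewrite dv0 => /size0nil q_nil; rewrite -q_last q_nil.
Qed.

Lemma dist_eq0E v : (dist v == 0%N) = (v == groot).
Proof. by apply/eqP/eqP => [/dist_eq0 | ->]; rewrite ?dist_root. Qed.

Lemma dist_adj u v : v \in padj u -> (dist v <= (dist u).+1)%N.
Proof.
move=> uv; have /asboolP [q [q_path q_last size_q]] := reachable_dist u.
apply: dist_min; apply/asboolP; exists (rcons q v).
by rewrite rcons_path q_path q_last last_rcons size_rcons size_q.
Qed.

(* Depths are smaller than the number of nodes (shortest walks are simple). *)
Lemma dist_lt v : (dist v < gn G)%N.
Proof.
have /asboolP [q [q_path <- _]] := reachable_dist v.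
case/shortenP: q_path => q' q'_path q'_uniq _.
have : (size (groot :: q') <= size (enum T))%N.
  by apply: uniq_leq_size => // x _; rewrite mem_enum.
rewrite size_enum_ord; apply: leq_ltn_trans; apply: dist_min.
by apply/asboolP; exists q'.
Qed.

Lemma dist_parent_ex v :
  v != groot -> exists u, (u \in padj v) && (dist u == (dist v).-1).
Proof.
move=> v_nroot; have /asboolP [q [q_path q_last size_q]] := reachable_dist v.
case/lastP: q q_path q_last size_q => [|q x] q_path q_last size_q.
  by rewrite -q_last eqxx in v_nroot.
rewrite last_rcons in q_last; subst x.
move: q_path; rewrite rcons_path => /andP [q_path q_adj].
exists (last groot q); rewrite -padj_sym q_adj /=.
have : (dist (last groot q) <= size q)%N by apply: dist_min; apply/asboolP; exists q.
have := dist_adj q_adj; rewrite size_rcons in size_q; lia.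
Qed.

Definition parent (v : T) : T :=
  if v == groot then groot else
  if [pick u | (u \in padj v) && (dist u == (dist v).-1)] is Some u then u
  else groot.

Lemma parent_adj v : v != groot -> parent v \in padj v.
Proof.
move=> v_nroot; rewrite /parent (negbTE v_nroot); case: pickP => [u /andP [] //|no_u].
by case: (dist_parent_ex v_nroot) => u; rewrite no_u.
Qed.

Lemma dist_parent v : dist (parent v) = (dist v).-1.
Proof.
rewrite /parent; case: eqP => [->|/eqP v_nroot]; first by rewrite dist_root.
case: pickP => [u /andP [_ /eqP] //|no_u].
by case: (dist_parent_ex v_nroot) => u; rewrite no_u.
Qed.

Lemma dist_iter_parent j v : dist (iter j parent v) = (dist v - j)%N.
Proof. by elim: j => [|j IH] /=; rewrite ?subn0 // dist_parent IH subnS. Qed.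

Definition ancestor (v u : T) : bool := iter (dist u - dist v) parent u == v.

Definition child (v c : T) : bool := (c != groot) && (parent c == v).

Lemma ancestor_refl v : ancestor v v.
Proof. by rewrite /ancestor subnn. Qed.

Lemma ancestor_root u : ancestor groot u.
Proof. by apply/eqP/dist_eq0; rewrite dist_iter_parent dist_root subn0 subnn. Qed.

Lemma ancestor_dist v u : ancestor v u -> (dist v <= dist u)%N.
Proof.
by move=> /eqP anc_v; have := dist_iter_parent (dist u - dist v) u; rewrite anc_v; lia.
Qed.

Lemma ancestor_dist_inj u v w :
  ancestor v u -> ancestor w u -> dist v = dist w -> v = w.
Proof. by rewrite /ancestor => /eqP anc_v /eqP anc_w dvw; rewrite -anc_v -anc_w dvw. Qed.

Lemma dist_child v c : child v c -> dist c = (dist v).+1.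
Proof.
by case/andP => c_nroot /eqP <-; rewrite dist_parent prednK // lt0n dist_eq0E.
Qed.

Lemma child_adj v c : child v c -> c \in padj v.
Proof. by case/andP => c_nroot /eqP <-; rewrite padj_sym parent_adj. Qed.

Lemma ancestor_child v c u :
  child v c -> ancestor c u -> ancestor v u && (u != v).
Proof.
move=> vc cu; have dc := dist_child vc; have du := ancestor_dist cu.
rewrite /ancestor (_ : dist u - dist v = (dist u - dist c).+1)%N; last by lia.
rewrite iterS (eqP cu); case/andP: vc => _ /eqP ->; rewrite eqxx /=.
by apply: contraTneq du => ->; lia.
Qed.

Lemma child_towards v u : ancestor v u -> u != v ->
  child v (iter (dist u - dist v).-1 parent u) &&
  ancestor (iter (dist u - dist v).-1 parent u) u.
Proof.
move=> vu u_nv; set c := iter _ parent u; have dv := ancestor_dist vu.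
have lt_dv : (dist v < dist u)%N.
  rewrite ltn_neqAle dv andbT; apply: contra u_nv => /eqP dvu.
  by move: vu; rewrite /ancestor dvu subnn.
have dc : dist c = (dist v).+1 by rewrite dist_iter_parent; lia.
apply/andP; split; last by rewrite /ancestor dc; apply/eqP; congr iter; lia.
apply/andP; split; first by rewrite -dist_eq0E dc.
by rewrite -iterS prednK ?subn_gt0.
Qed.

Variables (R : zmodType) (lam : T -> R).

Definition subtree_sum (v : T) : R := \sum_(u | ancestor v u) lam u.

Lemma subtree_sum_rec v :
  subtree_sum v = lam v + \sum_(c | child v c) subtree_sum c.
Proof.
rewrite /subtree_sum (bigD1 v) ?ancestor_refl //=; congr (_ + _).
rewrite (partition_big (fun u => iter (dist u - dist v).-1 parent u) (child v)).
  apply: eq_bigr => c vc; apply: eq_bigl => u; apply/idP/idP.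
    by case/andP=> /andP [vu u_nv] /eqP <-; case/andP: (child_towards vu u_nv).
  move=> cu; have /andP [vu u_nv] := ancestor_child vc cu; rewrite vu u_nv /=.
  case/andP: (child_towards vu u_nv) => vc' c'u; apply/eqP.
  by apply: ancestor_dist_inj c'u cu _; rewrite (dist_child vc) (dist_child vc').
by move=> u /andP [vu u_nv]; case/andP: (child_towards vu u_nv).
Qed.

End SpanningTree.

Lemma big_uniq_sub (I : finType) (R : zmodType) (s : seq I) (Q : pred I) (F : I -> R) :
  uniq s -> {subset Q <= s} -> \sum_(i <- s | Q i) F i = \sum_(i | Q i) F i.
Proof.
move=> s_uniq Q_s; rewrite -big_filter big_uniq ?filter_uniq //.
by apply: eq_bigl => i; rewrite mem_filter andb_idr //; apply: Q_s.
Qed.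

Lemma forest_sum (I : finType) (R : zmodType) (root : pred I) (par : I -> I)
    (s lam : I -> R) :
  (forall v, s v = lam v + \sum_(w | ~~ root w && (par w == v)) s w) ->
  \sum_(v | root v) s v = \sum_v lam v.
Proof.
move=> s_rec.
have total : \sum_v s v = \sum_v lam v + \sum_(w | ~~ root w) s w.
  rewrite (eq_bigr _ (fun v _ => s_rec v)) big_split /=; congr (_ + _).
  by rewrite [in RHS](partition_big par xpredT).
by move: total; rewrite (bigID root) /= => /addIr.
Qed.

Lemma exists_min0 (I : finType) (i0 : I) (d : I -> nat) (par : I -> I) :
  (forall v, d v != 0%N -> (d (par v) < d v)%N) -> exists rho, d rho = 0%N.
Proof.
move=> par_lt; case: (@arg_minnP _ i0 xpredT d isT) => rho _ rho_min.
exists rho; apply/eqP; apply: contraT => /par_lt.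
by rewrite ltnNge rho_min.
Qed.

Section TreeCertificate.
Variables (X : eqType) (R : zmodType).

(* What a node claims: the total, its own and its parent's identifier, its
   depth, the root identifier, and the sum over its subtree. *)
Record tnode := TNode {
  t_val : R; t_id : X; t_pid : X; t_dist : nat; t_rid : X; t_sum : R }.

Definition tree_check (idv : X) (lamv : R) (me : tnode) (nbrs : seq tnode) : bool :=
  [&& t_id me == idv,
      all (fun w => (t_val w == t_val me) && (t_rid w == t_rid me)) nbrs,
      if t_dist me == 0%N then (t_id me == t_rid me) && (t_sum me == t_val me)
      else has (fun w => (t_id w == t_pid me) && (t_dist w == (t_dist me).-1)) nbrs &
      t_sum me == lamv +
        \sum_(w <- nbrs | (t_pid w == t_id me) && (t_dist w != 0%N)) t_sum w].

Section Soundness.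
Variables (G : pgraph) (ident : 'I_(gn G) -> X) (lam : 'I_(gn G) -> R).
Variable view : 'I_(gn G) -> tnode.
Hypothesis ident_inj : injective ident.
Hypothesis view_ok : forall v, tree_check (ident v) (lam v) (view v) (map view (padj v)).
Local Notation T := 'I_(gn G).

Lemma view_id v : t_id (view v) = ident v.
Proof. by case/and4P: (view_ok v) => /eqP. Qed.

Lemma view_agree v u : u \in padj v ->
  t_val (view u) = t_val (view v) /\ t_rid (view u) = t_rid (view v).
Proof.
case/and4P: (view_ok v) => _ + _ _ vu; rewrite all_map => /allP agree.
by case/andP: (agree u vu) => /eqP -> /eqP ->.
Qed.

Lemma view_val_const u v : t_val (view u) = t_val (view v).
Proof. by apply: (const_on_graph (g := t_val \o view)) => {}u {}v /view_agree []. Qed.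

Lemma view_rid_const u v : t_rid (view u) = t_rid (view v).
Proof. by apply: (const_on_graph (g := t_rid \o view)) => {}u {}v /view_agree []. Qed.

(* A neighbour certifying the parent claim of v (v itself if there is none). *)
Definition claimed_parent (v : T) : T :=
  if [pick u | (u \in padj v) && (t_id (view u) == t_pid (view v))
                && (t_dist (view u) == (t_dist (view v)).-1)] is Some u then u else v.

Lemma claimed_parentP v : t_dist (view v) != 0%N ->
  [/\ claimed_parent v \in padj v, ident (claimed_parent v) = t_pid (view v)
    & t_dist (view (claimed_parent v)) = (t_dist (view v)).-1].
Proof.
move=> dv_n0; rewrite /claimed_parent -view_id; case: pickP.
  by move=> u /andP [/andP [vu /eqP id_u] /eqP d_u].
case/and4P: (view_ok v) => _ _ + _ no_par; rewrite (negbTE dv_n0).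
rewrite has_map => /hasP [u vu /andP [id_u d_u]].
by move: (no_par u); rewrite vu id_u d_u.
Qed.

(* Depth-0 nodes carry the common root identifier, so there is one root. *)
Lemma root_unique u v : t_dist (view u) = 0%N -> t_dist (view v) = 0%N -> u = v.
Proof.
have root_id w : t_dist (view w) = 0%N -> ident w = t_rid (view w).
  move=> dw0; case/and4P: (view_ok w) => _ _ + _; rewrite dw0 eqxx.
  by case/andP => /eqP <- _; rewrite view_id.
by move=> /root_id du /root_id dv; apply: ident_inj; rewrite du dv; exact: view_rid_const.
Qed.

(* Unique identifiers turn the local sum into a sum over claimed children. *)
Lemma view_sum_children v : t_sum (view v) = lam v +
  \sum_(w | (t_dist (view w) != 0%N) && (claimed_parent w == v)) t_sum (view w).
Proof.
case/and4P: (view_ok v) => _ _ _ /eqP ->; congr (_ + _).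
rewrite big_map (eq_bigl (fun w => (t_dist (view w) != 0%N) && (claimed_parent w == v))).
  apply: big_uniq_sub (padj_uniq v) _ => w /andP [dw_n0 /eqP <-].
  by have [w_par _ _] := claimed_parentP dw_n0; rewrite padj_sym.
move=> w /=; rewrite andbC view_id; case: (boolP (t_dist _ != 0%N)) => //= dw_n0.
have [_ <- _] := claimed_parentP dw_n0; exact: (inj_eq ident_inj).
Qed.

Theorem tree_check_sound v : t_val (view v) = \sum_u lam u.
Proof.
have [rho d_rho] : exists rho, t_dist (view rho) = 0%N.
  apply: (exists_min0 (groot G) (par := claimed_parent)) => w dw_n0.
  by have [_ _ ->] := claimed_parentP dw_n0; rewrite prednK ?lt0n.
have roots : \sum_(w | t_dist (view w) == 0%N) t_sum (view w) = t_sum (view rho).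
  by apply: big_pred1 => w /=; apply/eqP/eqP => [/root_unique/(_ d_rho) | ->].
rewrite -(forest_sum (root := fun w => t_dist (view w) == 0%N) view_sum_children).
rewrite roots (view_val_const v rho).
case/and4P: (view_ok rho) => _ _ + _; rewrite d_rho eqxx.
by case/andP => _ /eqP.
Qed.

End Soundness.

Definition bfs_view (G : pgraph) (ident : 'I_(gn G) -> X) (lam : 'I_(gn G) -> R)
    (v : 'I_(gn G)) : tnode :=
  TNode (\sum_u lam u) (ident v) (ident (parent v)) (dist v) (ident (groot G))
        (subtree_sum lam v).

Theorem tree_check_complete (G : pgraph) (ident : 'I_(gn G) -> X)
    (lam : 'I_(gn G) -> R) : injective ident ->
  forall v, tree_check (ident v) (lam v) (bfs_view ident lam v)
                       (map (bfs_view ident lam) (padj v)).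
Proof.
move=> ident_inj v; rewrite /bfs_view; apply/and4P; split=> //=.
- by rewrite all_map; apply/allP => u _ /=; rewrite !eqxx.
- have [/dist_eq0 v_root | dv_n0] := eqVneq (dist v) 0%N.
    rewrite v_root eqxx /subtree_sum /=.
    by apply/eqP/eq_bigl => u; rewrite ancestor_root.
  rewrite has_map; apply/hasP; exists (parent v); last by rewrite /= dist_parent !eqxx.
  by rewrite parent_adj // -dist_eq0E.
- rewrite subtree_sum_rec big_map; apply/eqP; congr (_ + _).
  rewrite (eq_bigl (child v)); first by rewrite big_uniq_sub ?padj_uniq //; exact: child_adj.
  by move=> u /=; rewrite (inj_eq ident_inj) dist_eq0E andbC.
Qed.

End TreeCertificate.

Section SumCodes.
Variables (R : realType) (lambda : bits -> bits -> R).

Lemma repr_bits_norm (x : R) H : repr_bits x H -> `|x| <= (2 ^ H)%:R.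
Proof.
case=> m [e [le_eH [lt_m ->]]]; have pow_gt0 : 0 < 2%:R ^+ e :> R by rewrite exprn_gt0.
rewrite normf_div ler_pdivrMr ?normr_gt0 ?gt_eqF // (ger0_norm (ltW pow_gt0)).
apply: (le_trans (y := (2 ^ H)%:R)); first by rewrite -intr_norm -natr_absz ler_nat ltnW.
by rewrite ler_peMr // -natrX ler1n expn_gt0.
Qed.

Lemma repr_bits_scale (x : R) H : repr_bits x H -> x * 2%:R ^+ H \is a Num.int.
Proof.
case=> m [e [le_eH [_ ->]]]; rewrite -(subnK le_eH) exprD mulrCA.
by rewrite divfK ?expf_neq0 ?pnatr_eq0 // rpredM ?rpredX ?intr_int ?natr_int.
Qed.

Section Family.
Variables (I : eqType) (F : I -> R) (H : nat) (s : seq I).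
Hypothesis F_repr : {in s, forall x, repr_bits (F x) H}.

Lemma sum_repr_norm : `|\sum_(x <- s) F x| <= (size s * 2 ^ H)%:R.
Proof.
elim: s F_repr => [|x s' IH] F_s; first by rewrite big_nil normr0.
rewrite big_cons /= mulSn natrD (le_trans (ler_normD _ _)) // lerD //.
  by apply: repr_bits_norm; apply: F_s; rewrite mem_head.
by apply: IH => y y_s'; apply: F_s; rewrite in_cons y_s' orbT.
Qed.

Lemma sum_repr_int : (\sum_(x <- s) F x) * 2%:R ^+ H \is a Num.int.
Proof.
by rewrite mulr_suml big_seq rpred_sum // => x /F_repr /repr_bits_scale.
Qed.

End Family.

(* Decoding of sum codes: either m / 2^e, or the sum of lambda over a list of
   (input, output) pairs. *)
Fixpoint sum_pairs (l : seq bits) : R :=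
  if l is a :: b :: l' then lambda a b + sum_pairs l' else 0.

Definition decR (l : bits) : R :=
  match dec l with
  | [:: true] :: a :: b :: _ => (decI a)%:~R / 2%:R ^+ decN b
  | _ :: l' => sum_pairs l'
  | [::] => 0
  end.

Local Notation lsum s := (\sum_(x <- s) lambda x.1 x.2).

Definition repr_all (s : seq (bits * bits)) (H : nat) : bool :=
  `[< {in s, forall x, repr_bits (lambda x.1 x.2) H} >].

(* A sum is sent as m / 2^H0 with the least admissible H0; if no precision
   works for the family, the family itself is sent. *)
Definition sum_code (s : seq (bits * bits)) : bits :=
  match pselect (exists H, repr_all s H) with
  | left ex_H =>
      enc [:: [:: true]; encI (Num.floor (lsum s * 2%:R ^+ ex_minn ex_H));
              encN (ex_minn ex_H)]
  | right _ => enc ([:: false] :: flatten [seq [:: x.1; x.2] | x <- s])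
  end.

Lemma decR_dyadic a b : decR (enc [:: [:: true]; a; b]) = (decI a)%:~R / 2%:R ^+ decN b.
Proof. by rewrite /decR dec_enc. Qed.

Lemma decR_pairs s : decR (enc ([:: false] :: flatten [seq [:: x.1; x.2] | x <- s])) = lsum s.
Proof.
by rewrite /decR dec_enc; elim: s => [|x s IH]; rewrite ?big_nil ?big_cons //= IH.
Qed.

Lemma decR_sum_code s : decR (sum_code s) = lsum s.
Proof.
rewrite /sum_code; case: pselect => [ex_H | _]; last exact: decR_pairs.
case: ex_minnP => H0 /asboolP s_repr _; rewrite decR_dyadic decI_encI decN_encN.
by rewrite floorK ?mulfK ?expf_neq0 ?pnatr_eq0 ?sum_repr_int.
Qed.

Lemma size_sum_code s H k : {in s, forall x, repr_bits (lambda x.1 x.2) H} ->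
  (size s < 2 ^ k)%N -> (size (sum_code s) <= 2 * k + 6 * H + 7)%N.
Proof.
move=> s_repr size_s; rewrite /sum_code; case: pselect => [ex_H | []]; last first.
  by exists H; apply/asboolP.
case: ex_minnP => H0 /asboolP s_repr0 H0_min; have le_H0 := H0_min _ (asboolT s_repr).
set M := Num.floor _.
have M_lt : (`|M| < 2 ^ (k + H + H))%N.
  have lt_bound : (size s * 2 ^ H * 2 ^ H < 2 ^ (k + H + H))%N.
    by rewrite !expnD !ltn_mul2r !expn_gt0 size_s.
  rewrite -(ltr_nat R).
  apply: le_lt_trans (_ : _ <= (size s * 2 ^ H * 2 ^ H)%:R) _; last by rewrite ltr_nat.
  rewrite natr_absz intr_norm floorK ?sum_repr_int // normrM normrX normr_nat.
  by rewrite natrM ler_pM ?(sum_repr_norm s_repr) // natrX ler_weXn2l ?ler1n.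
have := size_encI M_lt; have := size_encN (leq_ltn_trans le_H0 (ltn_expl H (ltnSn 1))).
by rewrite size_enc !big_cons big_nil /=; lia.
Qed.

End SumCodes.

Lemma choice2 (A B D : Type) (P : A -> B -> D -> Prop) :
  (forall a, exists b d, P a b d) ->
  exists (g : A -> B) (h : A -> D), forall a, P a (g a) (h a).
Proof.
move=> ex_bd; have ex_pair a : exists bd : B * D, P a bd.1 bd.2.
  by have [b [d Pabd]] := ex_bd a; exists (b, d).
by have [gh gh_ok] := boolp.choice ex_pair; exists (fst \o gh), (snd \o gh).
Qed.

Lemma adpls_gap (R : realType) (ismin : bool) (alpha K : R) (O : \bar R) :
  1 <= alpha ->
  ~ (if ismin then (O < (K / alpha)%:E)%E else (O > (alpha * K)%:E)%E) ->
  if ismin then (K%:E <= alpha%:E * O)%E else (K%:E >= O / alpha%:E)%E.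
Proof.
move=> alpha_ge1; have alpha_gt0 : 0 < alpha by apply: lt_le_trans alpha_ge1.
case: ismin => /negP; rewrite -leNgt; case: O => [x| |] /=.
- by rewrite lee_fin ler_pdivrMr // -EFinM lee_fin mulrC.
- by move=> _; rewrite mulry gtr0_sg // mul1e leey.
- by rewrite leeNy_eq.
- by rewrite lee_fin inver gt_eqF // -EFinM lee_fin mulrC -ler_pdivrMr // mulrC.
- by rewrite leye_eq.
- by move=> _; rewrite inver gt_eqF // mulNyr gtr0_sg ?invr_gt0 // mul1e leNye.
Qed.

Section Construction.
Variables (R : realType) (f : iograph -> int) (lambda : bits -> bits -> R).
Variable idf : bits -> bits.
Variables (verF : verifier (bits * bits)) (verA : int -> verifier bits).
(* A prover takes its configuration graph as an explicit argument. *)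
Unset Implicit Arguments.
Variables (prF : prover (bits * bits)) (prA : int -> prover bits).
Set Implicit Arguments.

Local Notation node_id C v := (idf (cstate C v).1).
Local Notation node_lam C v := (lambda (cstate C v).1 (cstate C v).2).

Definition node_pairs (C : iograph) (A : pred 'I_(nodes C)) : seq (bits * bits) :=
  [seq cstate C u | u <- enum A].

Lemma node_pairs_sum (C : iograph) (A : pred 'I_(nodes C)) :
  \sum_(x <- node_pairs A) lambda x.1 x.2 = \sum_(u in A) node_lam C u.
Proof. by rewrite big_map big_enum. Qed.

(* Fields: 0 feasibility label, 1 ADPLS label for k = f(C), 2 k, 3 own id,
   4 parent id, 5 depth, 6 root id, 7 subtree sum. *)
Definition apls_label : prover (bits * bits) := fun C v =>
  enc [:: prF C v; prA (f C) (inp C) v; encI (f C); node_id C v; node_id C (parent v);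
          encN (dist v); node_id C (groot (cg C)); sum_code lambda (node_pairs (ancestor v))].

Arguments apls_label : clear implicits.

Definition label_view (l : bits) : tnode bits R :=
  TNode (decI (field 2 l))%:~R (field 3 l) (field 4 l) (decN (field 5 l)) (field 6 l)
        (decR lambda (field 7 l)).

Definition apls_ver : verifier (bits * bits) := fun s l nl =>
  [&& verF s (field 0 l) (map (field 0) nl),
      verA (decI (field 2 l)) s.1 (field 1 l) (map (field 1) nl) &
      tree_check (idf s.1) (lambda s.1 s.2) (label_view l) (map label_view nl)].

Lemma map_field (X : Type) i (L : X -> bits) (g : X -> bits) (s : seq X) :
  (forall x, field i (L x) = g x) -> map (field i) (map L s) = map g s.
Proof. by move=> L_g; rewrite -map_comp; apply: eq_map. Qed.

Lemma apls_complete (C : iograph) :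
  injective (fun v => node_id C v) -> (f C)%:~R = \sum_(v < nodes C) node_lam C v ->
  accepts verF C (prF C) -> accepts (verA (f C)) (inp C) (prA (f C) (inp C)) ->
  accepts apls_ver C (apls_label C).
Proof.
move=> ident_inj f_sum feas_ok adpls_ok v.
have view_bfs u : label_view (apls_label C u) =
                  bfs_view (fun w => node_id C w) (fun w => node_lam C w) u.
  rewrite /label_view /bfs_view !field_enc /= decI_encI decN_encN f_sum decR_sum_code.
  by rewrite node_pairs_sum.
apply/and3P; split.
- rewrite (map_field (g := prF C)); last by move=> u; rewrite /apls_label field_enc.
  by rewrite /apls_label field_enc; exact: feas_ok.
- rewrite (map_field (g := prA (f C) (inp C))); last first.
    by move=> u; rewrite /apls_label field_enc.
  by rewrite /apls_label !field_enc decI_encI; exact: adpls_ok.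
- by rewrite view_bfs -map_comp (eq_map view_bfs); exact: tree_check_complete.
Qed.

Lemma apls_accepts_feas (C : iograph) (L : labeling C) :
  accepts apls_ver C L -> accepts verF C (fun v => field 0 (L v)).
Proof. by move=> acc v; have /and3P [feas_v _ _] := acc v; rewrite -map_comp in feas_v. Qed.

Lemma apls_accepts_adpls (C : iograph) (L : labeling C) :
  injective (fun v => node_id C v) -> (f C)%:~R = \sum_(v < nodes C) node_lam C v ->
  accepts apls_ver C L -> accepts (verA (f C)) (inp C) (fun v => field 1 (L v)).
Proof.
move=> ident_inj f_sum acc.
have views_ok u : tree_check (node_id C u) (node_lam C u) (label_view (L u))
                             (map (fun w => label_view (L w)) (padj u)).
  by have /and3P [_ _ tree_u] := acc u; rewrite -map_comp in tree_u.
have val_f u : decI (field 2 (L u)) = f C.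
  by apply: (@intr_inj R); rewrite f_sum; exact: (tree_check_sound ident_inj views_ok).
by move=> v; have /and3P [_ adpls_v _] := acc v; rewrite val_f -map_comp in adpls_v.
Qed.

Lemma apls_label_size (C : iograph) (v : 'I_(nodes C)) (p r c0 H : nat) :
  (size (prF C v) <= p)%N -> (size (prA (f C) (inp C) v) <= r)%N ->
  (forall u, size (node_id C u) <= c0 * trunc_log 2 (nodes C) + c0)%N ->
  (f C)%:~R = \sum_(u < nodes C) node_lam C u ->
  (forall u, repr_bits (node_lam C u) H) ->
  (size (apls_label C v) <=
     (32 + 6 * c0) * (p + r + trunc_log 2 (nodes C) + H) + (32 + 6 * c0))%N.
Proof.
move=> size_F size_A size_id f_sum lam_repr; set tl := trunc_log 2 (nodes C).
have n_lt : (nodes C < 2 ^ tl.+1)%N by apply: trunc_log_ltn.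
have pairs_repr (A : pred 'I_(nodes C)) :
    {in node_pairs A, forall x, repr_bits (lambda x.1 x.2) H}.
  by move=> x /mapP [u _ ->]; exact: lam_repr.
have pairs_size (A : pred 'I_(nodes C)) : (size (node_pairs A) < 2 ^ tl.+1)%N.
  by rewrite size_map -cardE (leq_ltn_trans (max_card _)) // card_ord.
have f_lt : (`|f C| < 2 ^ (tl.+1 + H))%N.
  have f_pairs : (f C)%:~R = \sum_(x <- node_pairs (C:=C) xpredT) lambda x.1 x.2.
    by rewrite node_pairs_sum f_sum; apply: eq_bigl.
  rewrite -(ltr_nat R) natr_absz intr_norm f_pairs.
  apply: le_lt_trans (sum_repr_norm (pairs_repr _)) _.
  by rewrite ltr_nat expnD ltn_mul2r expn_gt0 pairs_size.
have := size_encI f_lt; have := size_encN (ltn_trans (dist_lt v) n_lt).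
have := size_sum_code (pairs_repr (ancestor v)) (pairs_size _).
have := size_id v; have := size_id (parent v); have := size_id (groot (cg C)).
by rewrite size_enc !big_cons big_nil; nia.
Qed.

End Construction.

Unset Implicit Arguments.

Theorem lemma4p1 (R : realType) (ismin : bool)
    (Pi : iograph -> Prop) (f : iograph -> int)
    (lambda : bits -> bits -> R) (alpha : R) (p r : nat -> nat) :
  identified Pi ->
  decomposable Pi f lambda ->
  1 <= alpha ->
  (exists pr ver, feasibility_scheme Pi pr ver p) ->
  (forall k : int, exists pr ver, @ADPLS R Pi f ismin alpha k pr ver r) ->
  exists (pr : prover (bits * bits)) (ver : verifier (bits * bits)) (c : nat),
    @is_APLS R Pi f ismin alpha pr ver /\
    forall C : iograph, U_io Pi C -> APLS_Y R Pi f ismin C ->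
    forall H : nat,
      (forall v : 'I_(nodes C), repr_bits (lambda (cstate C v).1 (cstate C v).2) H) ->
      forall v : 'I_(nodes C),
        (size (pr C v) <=
           c * (p (nodes C) + r (nodes C) + trunc_log 2 (nodes C) + H) + c)%N.
Proof.
move=> [idf [c0 ids_ok]] f_decomp alpha_ge1 [prF [verF [[feas_yes feas_no] feas_size]]].
move=> /choice2 [prA [verA adpls_ok]].
have opt_yes C : APLS_Y R Pi f ismin C -> ADPLS_Y R Pi f ismin (f C) (inp C).
  by case=> _ opt_f; rewrite /ADPLS_Y -opt_f /fE; case: ifP.
exists (apls_label f lambda idf prF prA), (apls_ver lambda idf verF verA), (32 + 6 * c0).
split; first split.
- move=> C U_C yes_C; have [Pi_C _] := yes_C.
  apply: apls_complete (ids_ok C Pi_C).1 (f_decomp C Pi_C) (feas_yes C U_C Pi_C) _.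
  exact: (adpls_ok (f C)).1.1 (inp C) U_C (opt_yes C yes_C).
- move=> C U_C no_C L acc.
  have Pi_C : Pi C by apply: contrapT => nPi; exact: feas_no U_C nPi _ (apls_accepts_feas acc).
  apply: no_C; split=> //; apply: adpls_gap => // below.
  have adpls_acc := apls_accepts_adpls (ids_ok C Pi_C).1 (f_decomp C Pi_C) acc.
  exact: (adpls_ok (f C)).1.2 (inp C) U_C below _ adpls_acc.
- move=> C U_C yes_C H lam_repr v; have [Pi_C _] := yes_C.
  apply: apls_label_size => //; last exact: f_decomp.
  + exact: feas_size.
  + exact: (adpls_ok (f C)).2 (inp C) U_C (opt_yes C yes_C) v.
  + exact: (ids_ok C Pi_C).2.
Qed.
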